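(* Let ${\tt G}$ be a digraph with a fixed total order on its vertices. The function $\sigma_{\rm e}$ defined on covering pairs of the path poset by \[\sigma_{\rm e}({\tt H},{\tt H}\cup e)=\begin{cases}t(e,{\tt H})+1&\text{if }t(e,{\tt H})>s(e,{\tt H}),\\ s(e,{\tt H})&\text{if }s(e,{\tt H})>t(e,{\tt H}),\end{cases}\pmod 2\] is a sign assignment on $P({\tt G})$.
   Context: A digraph ${\tt G}=(V,E)$ has finite $V$ and $E\subseteq(V\times V)\setminus\{(v,v)\}$; for $e=(v,w)$, $s(e)=v$, $t(e)=w$. A multipath is a spanning subgraph (all vertices, subset of edges) each of whose connected components (of the underlying undirected graph) is an isolated vertex or a simple directed path (edges $e_1,\dots,e_k$ with $t(e_i)=s(e_{i+1})$, no repeated vertex, not a cycle). The path poset $P({\tt G})$ is the set of multipaths ordered by inclusion of edge sets; ${\tt H}\prec{\tt H}'$ (covering) iff ${\tt H}'={\tt H}\cup e$ is obtained by adding one edge $e$. For a multipath ${\tt H}$, order its components $c_0<c_1<\dots<c_k$ by their minimal vertices and, for $e\notin E({\tt H})$, let $s(e,{\tt H})$ (resp. $t(e,{\tt H})$) be the index $i$ of the component $c_i$ containing $s(e)$ (resp. $t(e)$); when ${\tt H}\cup e$ is a multipath these indices differ. A sign assignment on a poset assigns $\epsilon_{x,y}\in\mathbb Z_2$ to each covering pair $x\prec y$ such that for each square $x\prec y,y'\prec z$ ($y\ne y'$), $\epsilon_{x,y}+\epsilon_{y,z}\equiv\epsilon_{x,y'}+\epsilon_{y',z}+1\pmod 2$.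 *)

From mathcomp Require Import all_boot all_order.
Set Implicit Arguments. Unset Strict Implicit. Unset Printing Implicit Defensive.
Import Order.TTheory.
Local Open Scope order_scope.

Section PathPoset.
Context {d : Order.disp_t} {V : finOrderType d}.

Definition loopless (E : {set V * V}) : Prop := forall v : V, (v, v) \notin E.

Definition uadj (H : {set V * V}) : rel V :=
  fun x y => ((x, y) \in H) || ((y, x) \in H).

Definition comp (H : {set V * V}) (v : V) : {set V} :=
  [set w | connect (uadj H) v w].

(* Multipath: spanning subgraph of E each of whose components is either an
   isolated vertex (p of size 1) or a simple directed path
   p_0 -> p_1 -> ... -> p_k (p uniq, the edges of H leaving the component
   are exactly the consecutive pairs of p). *)
Definition multipath (E H : {set V * V}) : Prop :=
  H \subset E /\
  forall v : V, exists p : seq V,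
    [/\ uniq p, comp H v = [set x in p] &
        forall x y : V, x \in comp H v -> ((x, y) \in H) = ((x, y) \in zip p (behead p))].

Definition covers (E H H' : {set V * V}) : Prop :=
  multipath E H /\ multipath E H' /\ exists e, e \notin H /\ H' = e |: H.

Definition is_comp_min (H : {set V * V}) (w : V) : bool :=
  [forall u, connect (uadj H) w u ==> (w <= u)].

(* index i of the component c_i containing v, components ordered
   c_0 < c_1 < ... by their minimal vertices: the number of components whose
   minimal vertex is smaller than the minimal vertex of the component of v *)
Definition comp_index (H : {set V * V}) (v : V) : nat :=
  #|[set w : V | is_comp_min H w & [forall u, connect (uadj H) v u ==> (w < u)]]|.

(* sigma_e(H, H u e), with values in Z_2 = bool (true = 1) *)
Definition sigma_e (H H' : {set V * V}) : bool :=
  match [pick e in H' :\: H] with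
  | Some e =>
      let s := comp_index H e.1 in
      let t := comp_index H e.2 in
      if s < t then odd t.+1 else odd s
  | None => false
  end.

End PathPoset.

(* sign assignment on a poset (elements satisfying P, covering relation cov),
   Z_2 values as bool with addition addb *)
Definition is_sign_assignment {X : Type} (P : X -> Prop) (cov : X -> X -> Prop)
  (eps : X -> X -> bool) : Prop :=
  forall x y y' z, P x -> P y -> P y' -> P z ->
    cov x y -> cov y z -> cov x y' -> cov y' z -> y <> y' ->
    addb (eps x y) (eps y z) = ~~ addb (eps x y') (eps y' z).

From Pilot Require Import Defs.
From mathcomp Require Import all_boot all_order zify.
Set Implicit Arguments. Unset Strict Implicit. Unset Printing Implicit Defensive.
Import Order.TTheory.

(* Adding an edge [e] to a multipath [H] joins two distinct components (an
   edge inside a component would be one edge too many for a path), so the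
   component indices after the addition are obtained from the old ones by
   [merge_index]: the larger of the two merged indices collapses onto the
   smaller one and the indices above it shift down by one. Hence the signs
   around a square x < x + e1, x + e2 < x + e1 + e2 depend only on the four
   indices of the ends of e1 and e2 in x, and the sign-assignment identity
   becomes a finite check on their relative order. *)

Definition merge_index (s t j : nat) : nat :=
  if j == maxn s t then minn s t else if j < maxn s t then j else j.-1.

Definition sigma_index (s t : nat) : bool := if s < t then odd t.+1 else odd s.

Lemma merge_indexC s t : merge_index s t =1 merge_index t s.
Proof. by move=> j; rewrite /merge_index maxnC minnC. Qed.

Lemma merge_indexP s t j :
  [\/ j = maxn s t /\ merge_index s t j = minn s t,
      j < maxn s t /\ merge_index s t j = j
    | maxn s t < j /\ merge_index s t j = j.-1].
Proof.
rewrite /merge_index; case: eqP => [|ne]; first by constructor.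
by case: ifP => lt; [apply: Or32 | apply: Or33]; split=> //; lia.
Qed.

Lemma sigma_indexP s t :
  s < t /\ sigma_index s t = odd t.+1 \/ t <= s /\ sigma_index s t = odd s.
Proof. by rewrite /sigma_index; case: ltnP; [left | right]. Qed.

Lemma sigma_index_square s1 t1 s2 t2 :
  s1 != t1 -> s2 != t2 ->
  merge_index s1 t1 s2 != merge_index s1 t1 t2 ->
  merge_index s2 t2 s1 != merge_index s2 t2 t1 ->
  addb (sigma_index s1 t1)
       (sigma_index (merge_index s1 t1 s2) (merge_index s1 t1 t2)) =
  ~~ addb (sigma_index s2 t2)
          (sigma_index (merge_index s2 t2 s1) (merge_index s2 t2 t1)).
Proof.
move=> ne1 ne2.
have [[? ->]|[? ->]] := sigma_indexP s1 t1;
have [[? ->]|[? ->]] := sigma_indexP s2 t2;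
case: (merge_indexP s1 t1 s2) => -[? ->];
case: (merge_indexP s1 t1 t2) => -[? ->]; try (exfalso; lia);
case: (merge_indexP s2 t2 s1) => -[? ->]; try (exfalso; lia);
case: (merge_indexP s2 t2 t1) => -[? ->]; try (exfalso; lia);
do 2 (try match goal with |- context [sigma_index ?x ?y] =>
  case: (sigma_indexP x y) => -[? ->]; try (exfalso; lia) end); lia.
Qed.

Lemma mem_zip1 (S T : eqType) (s : seq S) (t : seq T) x y :
  (x, y) \in zip s t -> x \in s.
Proof.
elim: s t => [|a s IHs] [|b t] //=; rewrite !inE => /orP[/eqP[-> _]|/IHs ->];
  by rewrite ?eqxx ?orbT.
Qed.

Lemma setU1_diamond (T : finType) (X : {set T}) e1 e2 f1 f2 :
  e1 != e2 -> e1 \notin X -> e2 \notin X ->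
  f1 |: (e1 |: X) = f2 |: (e2 |: X) -> f1 = e2 /\ f2 = e1.
Proof.
move=> ne e1X e2X eqZ.
have: e2 \in f1 |: (e1 |: X) by rewrite eqZ !in_setU1 eqxx orbT.
have: e1 \in f2 |: (e2 |: X) by rewrite -eqZ !in_setU1 eqxx orbT.
rewrite !in_setU1 (negbTE e1X) (negbTE e2X) [e2 == e1]eq_sym (negbTE ne) !orbF.
by move=> /eqP-> /eqP->.
Qed.

Local Open Scope order_scope.

Section Rank.
Context {d : Order.disp_t} {T : finOrderType d}.
Implicit Types (F : {set T}) (x y z : T).

Definition rank F x := #|[set w in F | w < x]|.

Lemma rank_lt F x y : x \in F -> x < y -> (rank F x < rank F y)%N.
Proof.
move=> xF xy; apply: proper_card; apply/properP; split.
  by apply/subsetP => w; rewrite !inE => /andP[-> /lt_trans->].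
by exists x; rewrite !inE ?xF ?xy ?ltxx ?andbF.
Qed.

Lemma rank_setD1 F x y : y \in F -> rank (F :\ y) x = rank F x - (y < x)%O.
Proof.
move=> yF; rewrite /rank; have [yx|xy] := boolP (y < x).
  rewrite [#|[set w in F | _]|](cardsD1 y) !inE yF yx add1n subn1 /=.
  by apply: eq_card => w; rewrite !inE andbA.
rewrite subn0; apply: eq_card => w; rewrite !inE.
by case: eqVneq => [->|] //=; rewrite (negbTE xy) andbF.
Qed.

Lemma rank_eq F x y : x \in F -> y \in F -> (rank F x == rank F y) = (x == y).
Proof.
move=> xF yF; have [->|ne] := eqVneq x y; first by rewrite !eqxx.
apply/negbTE; rewrite neq_ltn.
by case/orP: (lt_total ne) => [/(rank_lt xF)|/(rank_lt yF)] ->; rewrite ?orbT.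
Qed.

Lemma rank_setD1_max F x y z : x \in F -> y \in F -> x != y -> z \in F ->
  rank (F :\ Order.max x y) (if z == Order.max x y then Order.min x y else z) =
  merge_index (rank F x) (rank F y) (rank F z).
Proof.
wlog xy : x y / x < y.
  move=> W xF yF ne; case/orP: (lt_total ne) => [xy|yx]; first exact: W.
  by rewrite maxC minC merge_indexC; apply: W; rewrite // eq_sym.
move=> xF yF _ zF; rewrite (max_idPr (ltW xy)) (min_idPl (ltW xy)) rank_setD1 //.
have rxy := rank_lt xF xy.
rewrite /merge_index (maxn_idPr (ltnW rxy)) (minn_idPl (ltnW rxy)).
have [->|zy] := eqVneq z y; first by rewrite ltNge (ltW xy) eqxx subn0.
case/orP: (lt_total zy) => [zy'|yz].
  have rzy := rank_lt zF zy'.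
  by rewrite ltNge (ltW zy') subn0 (ltn_eqF rzy) rzy.
have ryz := rank_lt yF yz.
by rewrite yz subn1 (gtn_eqF ryz) ltnNge (ltnW ryz).
Qed.

End Rank.

Section Components.
Context {d : Order.disp_t} {V : finOrderType d}.
Implicit Types (H : {set V * V}) (e : V * V) (u v w : V).

Lemma uadj_sym H : symmetric (uadj H).
Proof. by move=> x y; rewrite /uadj orbC. Qed.

Lemma connect_uadj_sym H : connect_sym (uadj H).
Proof. exact/sym_connect_sym/uadj_sym. Qed.

Definition comp_min H v : V := [arg min_(u < v | connect (uadj H) v u) u].

Lemma connect_comp_min H v : connect (uadj H) v (comp_min H v).
Proof. by rewrite /comp_min; case: arg_minP. Qed.

Lemma comp_min_le H v u : connect (uadj H) v u -> comp_min H v <= u.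
Proof. by rewrite /comp_min; case: arg_minP => // m _ min_m /min_m. Qed.

Lemma comp_min_unique H v m : connect (uadj H) v m ->
  (forall u, connect (uadj H) v u -> m <= u) -> comp_min H v = m.
Proof.
by move=> vm min_m; apply/le_anti; rewrite comp_min_le ?min_m ?connect_comp_min.
Qed.

Lemma eq_comp_min H v w : (comp_min H v == comp_min H w) = connect (uadj H) v w.
Proof.
apply/eqP/idP => [vw_min | vw].
  apply: connect_trans (connect_comp_min H v) _.
  by rewrite vw_min connect_uadj_sym connect_comp_min.
apply: comp_min_unique => [|u vu].
  exact: connect_trans vw (connect_comp_min H w).
by apply: comp_min_le; apply: connect_trans vu; rewrite connect_uadj_sym.
Qed.

Lemma comp_min_eq H v w : connect (uadj H) v w -> comp_min H v = comp_min H w.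
Proof. by move=> vw; apply/eqP; rewrite eq_comp_min. Qed.

Lemma comp_min_id H v : comp_min H (comp_min H v) = comp_min H v.
Proof. by apply/eqP; rewrite eq_comp_min connect_uadj_sym connect_comp_min. Qed.

Definition comp_mins H := [set w | comp_min H w == w].

Lemma comp_min_in_mins H v : comp_min H v \in comp_mins H.
Proof. by rewrite inE comp_min_id. Qed.

Lemma comp_indexE H v : comp_index H v = rank (comp_mins H) (comp_min H v).
Proof.
apply: eq_card => w; rewrite !inE; congr (_ && _).
  apply/forallP/eqP => [min_w | wE u].
    by apply/le_anti; rewrite comp_min_le ?(implyP (min_w _)) ?connect_comp_min.
  by apply/implyP => wu; rewrite -wE comp_min_le.
apply/forallP/idP => [lt_w | lt_w u].
  exact: (implyP (lt_w _)) (connect_comp_min H v).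
by apply/implyP => /comp_min_le; apply: lt_le_trans.
Qed.

Lemma uadj_setU1 H e x y :
  uadj (e |: H) x y = [|| (x, y) == e, (y, x) == e | uadj H x y].
Proof. by rewrite /uadj !in_setU1 orbACA -orbA. Qed.

Lemma connect_setU1 H e u v :
  connect (uadj (e |: H)) u v =
  connect (uadj H) u v ||
  (connect (uadj H) u e.1 || connect (uadj H) u e.2) &&
  (connect (uadj H) e.1 v || connect (uadj H) e.2 v).
Proof.
case: e => a b /=; set R := connect (uadj H); set R' := connect (uadj _).
have Rr w : R w w := connect0 _ w.
apply/idP/idP => [uv | ].
  pose Q := [pred z | R u z || (R u a || R u b) && (R a z || R b z)].
  have clQ : closed (uadj ((a, b) |: H)) Q.
    apply: (intro_closed (connect_uadj_sym _)) => x y; rewrite uadj_setU1 !inE.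
    case/or3P => [/eqP[-> ->] | /eqP[-> ->] | xy].
    1,2: by rewrite !Rr !orbT !andbT; case/orP => [->|/orP[]->]; rewrite ?orbT.
    have Rxy w : R w x -> R w y by move/connect_trans; apply; apply: connect1.
    by case/orP => [/Rxy -> // | /andP[-> /orP[/Rxy|/Rxy] ->]]; rewrite ?orbT.
  by have := closed_connect clQ uv; rewrite !inE Rr => <-.
have RR' : subrel R R'.
  by apply: connect_sub => x y xy; apply: connect1; rewrite uadj_setU1 xy !orbT.
have R'ab : R' a b by apply: connect1; rewrite uadj_setU1 eqxx.
have R'ba : R' b a by rewrite /R' connect_uadj_sym.
case/orP => [/RR' // | /andP[]].
by case/orP => /RR' ua /orP[] /RR' av;
  apply: connect_trans ua (connect_trans _ av) => //; apply: connect0.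
Qed.

Lemma multipath_card_comp_edges E H v : multipath E H ->
  #|[set q in H | q.1 \in Defs.comp H v]| = (#|Defs.comp H v|).-1.
Proof.
case=> _ /(_ v) [p [up defC Hp]].
have -> : [set q in H | q.1 \in Defs.comp H v] = [set q in zip p (behead p)].
  apply/setP => -[x y]; rewrite !inE /=.
  case xC: (connect (uadj H) v x); first by rewrite andbT Hp // inE.
  rewrite andbF; apply/esym/negbTE; apply: contraFN xC => /mem_zip1 xp.
  have: x \in Defs.comp H v by rewrite defC inE.
  by rewrite inE.
rewrite cardsE (card_uniqP (zip_uniql _ up)) defC cardsE (card_uniqP up).
by rewrite size_zip size_behead; lia.
Qed.

Lemma multipath_setU1_disconnected E H e :
  multipath E H -> multipath E (e |: H) -> e \notin H ->
  ~~ connect (uadj H) e.1 e.2.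
Proof.
move=> mH mH' eH; apply/negP => ab.
have compE : Defs.comp (e |: H) e.1 = Defs.comp H e.1.
  apply/setP => v; rewrite !inE connect_setU1 connect0 ab /=.
  by case av: (connect _ e.1 v) => //=; apply: contraFF (connect_trans ab) av.
have edgesE : [set q in e |: H | q.1 \in Defs.comp H e.1] =
              e |: [set q in H | q.1 \in Defs.comp H e.1].
  by apply/setP => q; rewrite !inE; case: eqVneq => [->|] //=; rewrite connect0.
have := multipath_card_comp_edges e.1 mH'.
rewrite compE edgesE cardsU1 (multipath_card_comp_edges e.1 mH) !inE (negbTE eH) /=.
by rewrite add1n => /esym/n_Sn.
Qed.

End Components.

Section MergeComponents.
Context {d : Order.disp_t} {V : finOrderType d}.
Variables (H : {set V * V}) (e : V * V).
Local Notation R := (connect (uadj H)).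
Local Notation ma := (comp_min H e.1).
Local Notation mb := (comp_min H e.2).

Lemma comp_min_setU1 v :
  comp_min (e |: H) v =
  if R v e.1 || R v e.2 then Order.min ma mb else comp_min H v.
Proof.
case: ifP => ve; apply: comp_min_unique => [|u]; rewrite connect_setU1 ve ?orbF //=.
- by rewrite minEle; case: ifP => _; rewrite connect_comp_min ?orbT.
- rewrite ge_min; case/orP => [vu | /orP[] /comp_min_le -> //]; rewrite ?orbT //.
  case/orP: ve => [va|vb]; first by rewrite -(comp_min_eq va) (comp_min_le vu).
  by rewrite -(comp_min_eq vb) (comp_min_le vu) orbT.
- exact: connect_comp_min.
- exact: comp_min_le.
Qed.

Lemma comp_min_setU1_max v :
  comp_min (e |: H) v =
  if comp_min H v == Order.max ma mb then Order.min ma mb else comp_min H v.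
Proof.
rewrite comp_min_setU1; case: ifPn => [/orP[va|vb] | ].
- rewrite (comp_min_eq va); case: eqVneq => // ne; apply/min_idPl.
  by move: ne; rewrite eq_sym eq_maxl -ltNge; apply: ltW.
- rewrite (comp_min_eq vb); case: eqVneq => // ne; apply/min_idPr.
  by move: ne; rewrite eq_sym eq_maxr -ltNge; apply: ltW.
- rewrite negb_or => /andP[va vb]; rewrite ifN //.
  by rewrite maxEle; case: ifP => _; rewrite eq_comp_min.
Qed.

Hypothesis disconnected : ~~ R e.1 e.2.

Lemma comp_mins_setU1 : comp_mins (e |: H) = comp_mins H :\ Order.max ma mb.
Proof.
apply/setP => w; rewrite !inE comp_min_setU1_max.
have [wM | wM] := eqVneq (comp_min H w) (Order.max ma mb); last first.
  by case: eqP => [wE|_]; [rewrite -wE wM | rewrite andbF].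
rewrite wM [Order.max _ _ == w]eq_sym andNb; apply/negbTE.
apply: contra disconnected => /eqP minw; rewrite -eq_comp_min.
have : comp_min H (Order.min ma mb) = Order.min ma mb.
  by rewrite minEle; case: ifP => _; apply: comp_min_id.
by rewrite {1}minw wM maxEle minEle; case: ifP => _ ->.
Qed.

Lemma comp_index_setU1_neq : comp_index H e.1 != comp_index H e.2.
Proof. by rewrite !comp_indexE rank_eq ?comp_min_in_mins // eq_comp_min. Qed.

Lemma comp_index_setU1 v :
  comp_index (e |: H) v =
  merge_index (comp_index H e.1) (comp_index H e.2) (comp_index H v).
Proof.
rewrite !comp_indexE comp_mins_setU1 comp_min_setU1_max.
by apply: rank_setD1_max; rewrite ?comp_min_in_mins ?eq_comp_min.
Qed.

End MergeComponents.

Lemma sigma_e_setU1 d (V : finOrderType d) (H : {set V * V}) e : e \notin H ->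
  sigma_e H (e |: H) = sigma_index (comp_index H e.1) (comp_index H e.2).
Proof.
move=> eH; rewrite /sigma_e (_ : _ :\: _ = [set e]) ?pick_set1 //.
by apply/setP => q; rewrite !inE; case: eqVneq => [->|]; rewrite ?eH ?andNb.
Qed.

Theorem lemma4p5 (d : Order.disp_t) (V : finOrderType d) (E : {set V * V}) :
  loopless E ->
  is_sign_assignment (multipath E) (covers E) (@sigma_e d V).
Proof.
(* Loops need no separate treatment: [multipath_setU1_disconnected] already
   excludes them. *)
move=> _ x y y' z mx my my' mz [_ [_ [e1 [e1x yE]]]] [_ [_ [f1 [f1y zE]]]]
  [_ [_ [e2 [e2x y'E]]]] [_ [_ [f2 [f2y zE']]]] yy'; subst y y'.
have ne12 : e1 != e2 by apply: contra_not_neq yy' => ->.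
have [? ?] := setU1_diamond ne12 e1x e2x (etrans (esym zE) zE'); subst f1 f2.
have mz12 : multipath E (e2 |: (e1 |: x)) by rewrite -zE.
have mz21 : multipath E (e1 |: (e2 |: x)) by rewrite -zE'.
have dis1 := multipath_setU1_disconnected mx my e1x.
have dis2 := multipath_setU1_disconnected mx my' e2x.
have dis12 := multipath_setU1_disconnected my mz12 f1y.
have dis21 := multipath_setU1_disconnected my' mz21 f2y.
have := comp_index_setU1_neq dis12; have := comp_index_setU1_neq dis21.
rewrite {1}zE zE' !sigma_e_setU1 //.
rewrite !(comp_index_setU1 dis1) !(comp_index_setU1 dis2).
move=> ne21 ne12'; apply: sigma_index_square ne12' ne21;
  exact: comp_index_setU1_neq.
Qed.
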